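(* Let $(M,g)$ be a four-dimensional oriented smooth Lorentzian manifold with Levi-Civita connection $\nabla$ and a smooth vector field $\tau^\mu$ with $\tau^\mu\tau_\mu=1$. Let $K^\nu$ be a smooth vector field with values in $\mathrm{Herm}(2)$ such that $K^\mu\tilde K^\nu+K^\nu\tilde K^\mu=2g^{\mu\nu}e$, $\nabla_\mu\pi_+(K^\mu)=0$ and $\pi_+(K^\nu)=\tau^\nu e$; set $L^\nu:=\pi_-(K^\nu)$. Let $C_\lambda$ be a smooth covector field with values in $\mathfrak{su}(2)$, and let $\varkappa_{\lambda\mu}{}^{\nu}$ be a smooth real tensor field with $\varkappa_{\lambda\mu}{}^{\lambda}=0$ and $\varkappa_{\lambda\mu\nu}=-\varkappa_{\lambda\nu\mu}$. If $$\nabla_\lambda L^\nu-[C_\lambda,L^\nu]=\varkappa_{\lambda\mu}{}^{\nu}L^\mu\quad\text{for all }\lambda,\nu,$$ then $$C_\lambda=-\tfrac14\big((\nabla_\lambda L^\nu)L_\nu-\varkappa_{\lambda\mu\nu}L^\mu L^\nu\big).$$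
   Context: Greek indices are raised/lowered with $g$ and repeated indices are summed. $e$ is the $2\times2$ identity matrix; $\mathrm{Herm}(2)$ is the set of Hermitian $2\times2$ matrices; $\mathfrak{su}(2)$ is the set of traceless anti-Hermitian $2\times2$ matrices. For $A\in\mathrm{Mat}(2,\mathbb{C})$: $\pi_+(A)=\tfrac12(\operatorname{tr}A)e$, $\pi_-(A)=A-\pi_+(A)$, $\tilde A=\pi_+(A)-\pi_-(A)$. Products of matrix-valued tensor fields are matrix products of their components; the covariant derivative of a matrix-valued tensor field $V=v_a\sigma^a$ (Pauli basis $\sigma^0=e,\sigma^1,\sigma^2,\sigma^3$, complex tensor fields $v_a$) is $(\nabla v_a)\sigma^a$. *)

(* Local-coordinate (chart) formalization
   of the geometric setting: the manifold is modelled by an open set U of R^4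
   (points are row vectors 'rV[R]_4), tensors are given by their coordinate
   components, and the Levi-Civita connection by its Christoffel symbols. *)
From HB Require Import structures.
From mathcomp Require Import all_boot all_order all_algebra.
From mathcomp Require Import all_classical all_reals all_analysis.
From mathcomp.real_closed Require Import complex.

Set Implicit Arguments.
Unset Strict Implicit.
Unset Printing Implicit Defensive.

Import numFieldNormedType.Exports.
Import Order.TTheory GRing.Theory Num.Theory.
Local Open Scope ring_scope.
Local Open Scope classical_set_scope.

Notation pt R := 'rV[R]_4.

Section Defs.
Variable R : realType.
Local Notation pt := 'rV[R]_4.
Definition cbasis (i : 'I_4) : pt := delta_mx 0 i.

Definition cR (r : R) : R[i] := Complex r 0.

Definition pd (i : 'I_4) (f : pt -> R) : pt -> R := fun x => 'D_(cbasis i) f x.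

Fixpoint Ck_on (U : set pt) (k : nat) (f : pt -> R) : Prop :=
  match k with
  | 0 => forall x, U x -> {for x, continuous f}
  | k'.+1 => (forall x, U x -> differentiable f x) /\
             (forall i, Ck_on U k' (pd i f))
  end.

Definition smooth_on (U : set pt) (f : pt -> R) := forall k, Ck_on U k f.

Definition smoothC_on (U : set pt) (f : pt -> R[i]) :=
  smooth_on U (fun x => complex.Re (f x)) /\ smooth_on U (fun x => complex.Im (f x)).

Definition pdC (i : 'I_4) (f : pt -> R[i]) : pt -> R[i] := fun x =>
  Complex (pd i (fun y => complex.Re (f y)) x) (pd i (fun y => complex.Im (f y)) x).

Definition smoothM_on (U : set pt) (F : pt -> 'M[R[i]]_2) :=
  forall j k, smoothC_on U (fun x => F x j k).

Definition pauli (a : 'I_4) : 'M[R[i]]_2 :=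
  \matrix_(r < 2, c < 2)
    match nat_of_ord a with
    | 0 => if r == c then 1 else 0
    | 1 => if r == c then 0 else 1
    | 2 => if r == c then 0 else (if nat_of_ord r == 0 then - 'i else 'i)
    | _ => if r == c then (if nat_of_ord r == 0 then 1 else -1) else 0
    end.

(* component v_a of A = v_a sigma^a  (tr(sigma^a sigma^b) = 2 delta_ab) *)
Definition pauli_coef (a : 'I_4) (A : 'M[R[i]]_2) : R[i] :=
  (2%:R)^-1 * \tr (pauli a *m A).

Definition pip (A : 'M[R[i]]_2) : 'M[R[i]]_2 := ((2%:R)^-1 * \tr A)%:M.
Definition pim (A : 'M[R[i]]_2) : 'M[R[i]]_2 := A - pip A.
Definition tildeM (A : 'M[R[i]]_2) : 'M[R[i]]_2 := pip A - pim A.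

Definition adjM (A : 'M[R[i]]_2) : 'M[R[i]]_2 := (map_mx (@conjc R) A)^T.
Definition herm2 (A : 'M[R[i]]_2) := adjM A = A.
Definition su2_mat (A : 'M[R[i]]_2) := adjM A = - A /\ \tr A = 0.

Definition ginv (g : pt -> 'M[R]_4) (x : pt) : 'M[R]_4 := invmx (g x).

Definition minkowski : 'M[R]_4 :=
  diag_mx (\row_(i < 4) if i == 0 then 1 else -1).

Definition lorentzian_on (U : set pt) (g : pt -> 'M[R]_4) :=
  (forall m n, smooth_on U (fun x => g x m n)) /\
  forall x, U x -> (g x)^T = g x /\
    exists P : 'M[R]_4, P \in unitmx /\
      (P^T *m g x *m P = minkowski \/ P^T *m g x *m P = - minkowski).

Definition christoffel (g : pt -> 'M[R]_4) (x : pt) (nu lam mu : 'I_4) : R :=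
  (2%:R)^-1 * \sum_(rho < 4) ginv g x nu rho *
     (pd lam (fun y => g y rho mu) x + pd mu (fun y => g y rho lam) x
      - pd rho (fun y => g y lam mu) x).

Definition covC (g : pt -> 'M[R]_4) (v : pt -> 'I_4 -> R[i]) (x : pt)
    (lam nu : 'I_4) : R[i] :=
  pdC lam (fun y => v y nu) x + \sum_(mu < 4) cR (christoffel g x nu lam mu) * v x mu.

Definition covM (g : pt -> 'M[R]_4) (V : pt -> 'I_4 -> 'M[R[i]]_2) (x : pt)
    (lam nu : 'I_4) : 'M[R[i]]_2 :=
  \sum_(a < 4) covC g (fun y mu => pauli_coef a (V y mu)) x lam nu *: pauli a.

Definition divM (g : pt -> 'M[R]_4) (V : pt -> 'I_4 -> 'M[R[i]]_2) (x : pt) :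
  'M[R[i]]_2 := \sum_(mu < 4) covM g V x mu mu.

End Defs.

(* At each point the matrices L^nu = pi_-(K^nu) are traceless and Hermitian,
   hence real combinations L^nu = l^nu_a sigma^a of the three Pauli matrices,
   and the Clifford relation becomes l l^T = tau tau^T - g^{-1}.  Since tau is
   a unit vector, this forces l^T g l = -1, so that contracting with the
   lowered L_nu gives L^nu X L_nu = - sigma^a X sigma^a = X - 2 (tr X) e for
   every 2x2 matrix X.  Multiplying the equation by L_nu and summing, the
   cases X = e and X = C_lambda (traceless) yield
   (nabla_lambda L^nu) L_nu - kappa_{lambda mu nu} L^mu L^nu = -4 C_lambda. *)

From Pilot Require Import Defs.
From HB Require Import structures.
From mathcomp Require Import all_boot all_order all_algebra.
From mathcomp Require Import all_classical all_reals all_analysis.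
From mathcomp.real_closed Require Import complex.
From mathcomp Require Import ring lra.

Set Implicit Arguments.
Unset Strict Implicit.
Unset Printing Implicit Defensive.

Import numFieldNormedType.Exports.
Import Order.TTheory GRing.Theory Num.Theory.
Local Open Scope ring_scope.
Local Open Scope classical_set_scope.

HB.instance Definition _ (R : realType) :=
  GRing.RMorphism.copy (@cR R) (real_complex R).

Section MatrixSums.
Variables (S : comPzRingType) (p : nat).

Lemma scalar_shift_anticomm (a b : S) (X Y : 'M[S]_p) :
  (a%:M + X) *m (b%:M - Y) + (b%:M + Y) *m (a%:M - X)
  = ((a * b) *+ 2)%:M - (X *m Y + Y *m X).
Proof.
rewrite !mulmxDl !mulmxBr !mul_scalar_mx !mul_mx_scalar !scale_scalar_mx mulrC.
rewrite [b *: X - _]addrC [a *: Y - _]addrC addrACA [_%:M - _ + _]addrACA.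
rewrite [- (X *m Y) + _ + _]addrACA addrACA [b *: X + _]addrC -!opprD.
by rewrite [_%:M - _ + _]addrACA -opprD addrACA addNr addr0 -mulr2n raddfMn.
Qed.

Lemma mulmx_sum_scale k (s : 'I_k -> 'M[S]_p) (v w : 'I_k -> S) X :
  (\sum_a v a *: s a) *m X *m (\sum_b w b *: s b)
  = \sum_a \sum_b (v a * w b) *: (s a *m X *m s b).
Proof.
rewrite !mulmx_suml; apply: eq_bigr => a _.
rewrite -!scalemxAl mulmx_sumr scaler_sumr; apply: eq_bigr => b _.
by rewrite -scalemxAr scalerA.
Qed.

Lemma sum_contract_conj k m (s : 'I_k -> 'M[S]_p) (c : 'M[S]_(m, k))
    (G : 'M[S]_m) X :
  \sum_n (\sum_a c n a *: s a) *m X *m (\sum_r G n r *: \sum_b c r b *: s b)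
  = \sum_a \sum_b (c^T *m G *m c) a b *: (s a *m X *m s b).
Proof.
have lower n : \sum_r G n r *: \sum_b c r b *: s b
               = \sum_b (G *m c) n b *: s b.
  under eq_bigr do rewrite scaler_sumr.
  rewrite exchange_big; apply: eq_bigr => b _.
  by rewrite mxE scaler_suml; apply: eq_bigr => r _; rewrite scalerA.
under eq_bigr do rewrite lower mulmx_sum_scale.
rewrite exchange_big; apply: eq_bigr => a _.
rewrite exchange_big; apply: eq_bigr => b _.
rewrite -scaler_suml -[c^T *m G *m c]mulmxA mxE; congr (_ *: _).
by apply: eq_bigr => n _; rewrite !mxE.
Qed.

Lemma quad_form_col (G : 'M[S]_p) (v : 'I_p -> S) :
  (\col_i v i)^T *m G *m \col_i v i = (\sum_m \sum_n G m n * v m * v n)%:M.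
Proof.
apply/matrixP => i j; rewrite !ord1 !mxE mulr1n exchange_big.
apply: eq_bigr => n _; rewrite !mxE big_distrl /=.
by apply: eq_bigr => m _; rewrite !mxE [v m * _]mulrC.
Qed.

End MatrixSums.

Section RealFrame.
Variable F : realDomainType.

Lemma mxtrace_mulmx_tr_eq0 m n (A : 'M[F]_(m, n)) :
  \tr (A *m A^T) = 0 -> A = 0.
Proof.
have -> : \tr (A *m A^T) = \sum_i \sum_j A i j ^+ 2.
  apply: eq_bigr => i _; rewrite mxE.
  by apply: eq_bigr => j _; rewrite mxE expr2.
move=> sq0; have row0 i : \sum_j A i j ^+ 2 = 0.
  apply: (psumr_eq0P _ sq0) => // i' _.
  by apply: sumr_ge0 => j _; exact: sqr_ge0.
apply/matrixP => i j; rewrite mxE; apply/eqP; rewrite -sqrf_eq0; apply/eqP.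
by apply: (psumr_eq0P _ (row0 i)) => // j' _; exact: sqr_ge0.
Qed.

(* With [u := t^T G l], [u u^T = (t^T G t)^2 - t^T G t = 0]; then [M := l^T G l]
   satisfies [M^2 = -M] and [tr M = -n], so [M + 1] is a symmetric idempotent
   of trace 0. *)
Lemma frame_orthonormal n (G Gi : 'M[F]_n.+1) (t : 'cV[F]_n.+1)
    (l : 'M[F]_(n.+1, n)) :
  G^T = G -> G *m Gi = 1%:M -> t^T *m G *m t = 1%:M ->
  l *m l^T = t *m t^T - Gi -> l^T *m G *m l = - 1%:M.
Proof.
move=> Gsym GGi tnorm ll.
set u := t^T *m G *m l.
have uT : u^T = l^T *m G *m t by rewrite /u !trmx_mul trmxK Gsym mulmxA.
have u0 : u = 0.
  apply: mxtrace_mulmx_tr_eq0.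
  have -> : u *m u^T = t^T *m G *m (l *m l^T) *m G *m t by rewrite uT !mulmxA.
  rewrite ll mulmxBr !mulmxBl !mulmxA -(mulmxA _ G Gi) GGi mulmx1 tnorm.
  by rewrite mul1mx tnorm subrr mxtrace0.
set M := l^T *m G *m l.
have MM : M *m M = - M.
  have -> : M *m M = l^T *m G *m (l *m l^T) *m G *m l by rewrite /M !mulmxA.
  rewrite ll mulmxBr !mulmxBl -(mulmxA _ G Gi) GGi mulmx1.
  have -> : l^T *m G *m (t *m t^T) *m G *m l = u^T *m u by rewrite uT /u !mulmxA.
  by rewrite u0 mulmx0 sub0r.
have trM : \tr M = 1 - n.+1%:R.
  rewrite /M mxtrace_mulC mulmxA ll mulmxBl linearB /= (mulmx1C GGi) mxtrace1.
  by rewrite -mulmxA mxtrace_mulC tnorm mxtrace1.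
have Msym : M^T = M by rewrite /M !trmx_mul trmxK Gsym mulmxA.
suff : M + 1%:M = 0 by move/eqP; rewrite addr_eq0 => /eqP.
apply: mxtrace_mulmx_tr_eq0.
rewrite linearD /= Msym tr_scalar_mx mulmxDl !mulmxDr MM mulmx1 mul1mx mulmx1.
rewrite !mxtraceD linearN /= trM mxtrace1; ring.
Qed.

End RealFrame.

Section TwoByTwo.
Variable S : pzRingType.

Local Ltac entrywise := apply/matrixP => -[[|[|//]] ?] [[|[|//]] ?]; rewrite !mxE.

Definition mk2 (a b c d : S) : 'M[S]_2 :=
  \matrix_(i, j) if i == 0 :> nat then (if j == 0 :> nat then a else b)
                 else (if j == 0 :> nat then c else d).

Lemma mk2E (A : 'M[S]_2) : A = mk2 (A 0 0) (A 0 1) (A 1 0) (A 1 1).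
Proof.
apply/matrixP => i j; rewrite mxE.
by case: i j => [[|[|//]] ?] [[|[|//]] ?] /=; congr (A _ _); apply: val_inj.
Qed.

Lemma mulmx_mk2 a b c d a' b' c' d' :
  mk2 a b c d *m mk2 a' b' c' d'
  = mk2 (a * a' + b * c') (a * b' + b * d') (c * a' + d * c') (c * b' + d * d').
Proof.
apply/matrixP => i j; rewrite !mxE !big_ord_recr big_ord0 /= !mxE add0r.
by case: i j => [[|[|//]] ?] [[|[|//]] ?].
Qed.

Lemma addmx_mk2 a b c d a' b' c' d' :
  mk2 a b c d + mk2 a' b' c' d' = mk2 (a + a') (b + b') (c + c') (d + d').
Proof. by entrywise. Qed.

Lemma oppmx_mk2 a b c d : - mk2 a b c d = mk2 (- a) (- b) (- c) (- d).
Proof. by entrywise. Qed.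

Lemma scalemx_mk2 k a b c d : k *: mk2 a b c d = mk2 (k * a) (k * b) (k * c) (k * d).
Proof. by entrywise. Qed.

Lemma scalar_mk2 k : k%:M = mk2 k 0 0 k.
Proof. by entrywise. Qed.

Lemma mxtrace_mk2 a b c d : \tr (mk2 a b c d) = a + d.
Proof. by rewrite /mxtrace !big_ord_recr big_ord0 /= !mxE add0r. Qed.

End TwoByTwo.

Definition mk2_algE := (mulmx_mk2, addmx_mk2, oppmx_mk2, scalemx_mk2, scalar_mk2).

Section Spin.
Variable R : realType.
Implicit Types (x y : R[i]) (v w : 'I_3 -> R).

Lemma complex_eq x y :
  complex.Re x = complex.Re y -> complex.Im x = complex.Im y -> x = y.
Proof. by case: x y => ? ? [? ?] /= -> ->. Qed.

Local Ltac complex_ring := apply: complex_eq => /=; ring.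

Definition o0 : 'I_3 := @Ordinal 3 0 isT.
Definition o1 : 'I_3 := @Ordinal 3 1 isT.
Definition o2 : 'I_3 := @Ordinal 3 2 isT.

Lemma sum_ord3 (V : zmodType) (f : 'I_3 -> V) : \sum_a f a = f o0 + f o1 + f o2.
Proof.
rewrite !big_ord_recr big_ord0 /= add0r.
by congr (f _ + f _ + f _); apply: val_inj.
Qed.

(* [spin v] is [v_0 sigma^1 + v_1 sigma^2 + v_2 sigma^3], so [sigma a] below is
   the Pauli matrix sigma^(a+1). *)
Definition spin v : 'M[R[i]]_2 :=
  mk2 (cR (v o2)) (Complex (v o0) (- v o1)) (Complex (v o0) (v o1)) (cR (- v o2)).

Definition sigma (a : 'I_3) : 'M[R[i]]_2 := spin (fun b => (a == b)%:R).

Lemma spin_anticomm v w :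
  spin v *m spin w + spin w *m spin v = (cR (\sum_a v a * w a) *+ 2)%:M.
Proof. by rewrite sum_ord3 /spin !mk2_algE; congr mk2; complex_ring. Qed.

Lemma spin_sum v : spin v = \sum_a cR (v a) *: sigma a.
Proof. by rewrite sum_ord3 /sigma /spin !mk2_algE; congr mk2; complex_ring. Qed.

Lemma sum_sigma_conj (X : 'M[R[i]]_2) :
  \sum_a sigma a *m X *m sigma a = (\tr X *+ 2)%:M - X.
Proof.
rewrite [X]mk2E mxtrace_mk2 sum_ord3 /sigma /spin !mk2_algE.
case: (X 0 0) (X 0 1) (X 1 0) (X 1 1) => [? ?] [? ?] [? ?] [? ?].
by congr mk2; complex_ring.
Qed.

Lemma spin_of_herm (A : 'M[R[i]]_2) :
  herm2 A -> \tr A = 0 -> exists v, A = spin v.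
Proof.
move=> hA trA.
exists (fun a =>
  [:: complex.Re (A 0 1); - complex.Im (A 0 1); complex.Re (A 0 0)]`_a).
have adjE i j : A i j = (A j i)^*%C by rewrite -{1}hA !mxE.
have A11 : A 1 1 = - A 0 0.
  move: trA; rewrite [A in \tr A]mk2E mxtrace_mk2 addrC => /eqP.
  by rewrite addr_eq0 => /eqP.
have ImA00 : complex.Im (A 0 0) = 0.
  by move: (adjE 0 0); case: (A 0 0) => a b /= []; lra.
rewrite {1}[A]mk2E [A 1 0]adjE A11 /spin /=.
case: (A 0 0) ImA00 => a b /= ->; case: (A 0 1) => c d /=.
by congr mk2; complex_ring.
Qed.

End Spin.

Arguments sigma {R}.

Section ConnectionSolve.
Variables (F : numFieldType) (k p : nat).

Lemma connection_solve (L W D E : 'I_k -> 'M[F]_p.+1) (C : 'M[F]_p.+1) :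
  (forall X, \sum_n L n *m X *m W n = X - (\tr X *+ 2)%:M) -> \tr C = 0 ->
  (forall n, D n - (C *m L n - L n *m C) = E n) ->
  C = - ((p.+1).*2%:R)^-1 *: (\sum_n D n *m W n - \sum_n E n *m W n).
Proof.
move=> conj trC eqD.
have DW : \sum_n D n *m W n
          = C *m (\sum_n L n *m 1%:M *m W n) - \sum_n L n *m C *m W n
            + \sum_n E n *m W n.
  rewrite mulmx_sumr -sumrB -big_split; apply: eq_bigr => n _ /=.
  by rewrite -(eqD n) mulmx1 !mulmxBl !mulmxA addrC subrK.
rewrite DW addrK !conj trC mul0rn raddf0 subr0 mxtrace1.
rewrite mulmxBr mulmx1 mul_mx_scalar addrAC subrr add0r scalerN scalerA mulNr.
rewrite scaleNr opprK -muln2 natrM mulr_natr.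
by rewrite mulVf ?scale1r // mulrn_eq0 pnatr_eq0.
Qed.

End ConnectionSolve.

Section PauliFrame.
Variable R : realType.

Lemma mxtrace_pim (A : 'M[R[i]]_2) : \tr (pim A) = 0.
Proof.
rewrite /pim /pip linearB /= mxtrace_scalar -mulrnAr -[\tr A *+ 2]mulr_natl.
by rewrite mulrA mulVf ?mul1r ?subrr.
Qed.

Lemma herm2_pim (A : 'M[R[i]]_2) : herm2 A -> herm2 (pim A).
Proof.
rewrite /herm2 /adjM /pim /pip => hA.
rewrite map_mxB map_scalar_mx linearB /= tr_scalar_mx hA; congr (_ - _%:M).
rewrite rmorphM rmorphV ?unitfE ?pnatr_eq0 // rmorph_nat.
by rewrite -trace_map_mx -mxtrace_tr hA.
Qed.

Lemma pim_anticomm (A B : 'M[R[i]]_2) a b c :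
  pip A = a%:M -> pip B = b%:M -> A *m tildeM B + B *m tildeM A = c%:M ->
  pim A *m pim B + pim B *m pim A = ((a * b) *+ 2)%:M - c%:M.
Proof.
move=> pipA pipB.
have pipDpim (M : 'M[R[i]]_2) : M = pip M + pim M by rewrite /pim addrC subrK.
rewrite {1}(pipDpim A) {2}(pipDpim B) /tildeM pipA pipB scalar_shift_anticomm.
by move=> <-; rewrite opprB [RHS]addrC subrK.
Qed.

Lemma pauli_frame (tau : 'I_4 -> R) (Gi : 'M[R]_4) (K : 'I_4 -> 'M[R[i]]_2) :
  (forall n, herm2 (K n)) -> (forall n, pip (K n) = (cR (tau n))%:M) ->
  (forall m n,
     K m *m tildeM (K n) + K n *m tildeM (K m) = (cR (2%:R * Gi m n))%:M) ->
  exists l : 'M[R]_(4, 3),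
    (forall n, pim (K n) = spin (fun a => l n a)) /\
    l *m l^T = \col_n tau n *m (\col_n tau n)^T - Gi.
Proof.
move=> herm pipK cliff.
have /fin_all_exists [v Lv] : forall n, exists v, pim (K n) = spin v.
  by move=> n; apply: spin_of_herm; [exact: herm2_pim | exact: mxtrace_pim].
exists (\matrix_(n, a) v n a); split=> [n | ].
  by rewrite Lv; congr spin; apply: boolp.funext => a; rewrite mxE.
apply/matrixP => m n; rewrite !mxE big_ord1 !mxE.
have := pim_anticomm (pipK m) (pipK n) (cliff m n).
rewrite !Lv spin_anticomm => /(congr1 (fun M : 'M[R[i]]_2 => M 0 0)).
rewrite !mxE eqxx !mulr1n.
rewrite -rmorphM -!rmorphMn -rmorphB => /(congr1 (@complex.Re R)) /= cliff_mn.
under eq_bigr do rewrite !mxE.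
lra.
Qed.

Lemma sum_spin_conj (G : 'M[R]_4) (l : 'M[R]_(4, 3)) (L : 'I_4 -> 'M[R[i]]_2)
    X :
  (forall n, L n = spin (fun a => l n a)) -> l^T *m G *m l = - 1%:M ->
  \sum_n L n *m X *m (\sum_r cR (G n r) *: L r) = X - (\tr X *+ 2)%:M.
Proof.
move=> Lspin gram.
set c := map_mx (@cR R) l.
have Lc n : L n = \sum_a c n a *: sigma a.
  by rewrite Lspin spin_sum; apply: eq_bigr => a _; rewrite mxE.
transitivity (\sum_n (\sum_a c n a *: sigma a) *m X
                *m (\sum_r map_mx (@cR R) G n r *: \sum_b c r b *: sigma b)).
  apply: eq_bigr => n _; rewrite Lc; congr (_ *m _).
  by apply: eq_bigr => r _; rewrite Lc mxE.
rewrite sum_contract_conj map_trmx -!map_mxM gram map_mxN map_mx1.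
rewrite -[X - _]opprB -sum_sigma_conj -sumrN; apply: eq_bigr => a _.
rewrite (bigD1 a) //= big1 => [|b ba]; rewrite !mxE ?eqxx.
  by rewrite addr0 mulr1n scaleN1r.
by rewrite eq_sym (negbTE ba) mulr0n oppr0 scale0r.
Qed.

Lemma sum_lowered_comb m p (G : 'M[R]_m) (k : 'I_m -> 'I_m -> R)
    (L : 'I_m -> 'M[R[i]]_p) :
  G^T = G ->
  \sum_n (\sum_j cR (k j n) *: L j) *m (\sum_r cR (G n r) *: L r)
  = \sum_j \sum_n cR (\sum_r G n r * k j r) *: (L j *m L n).
Proof.
move=> Gsym.
under eq_bigr do rewrite -[X in X *m _]mulmx1 mulmx_sum_scale.
rewrite exchange_big; apply: eq_bigr => j _.
under [RHS]eq_bigr do rewrite rmorph_sum scaler_suml.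
rewrite [RHS]exchange_big; apply: eq_bigr => n _; apply: eq_bigr => r _.
by rewrite mulmx1 -rmorphM mulrC -{1}Gsym mxE.
Qed.

End PauliFrame.

Section Lorentzian.
Variables (R : realType) (U : set (pt R)) (g : pt R -> 'M[R]_4).
Hypothesis lor : lorentzian_on U g.

Lemma minkowski_unit : Defs.minkowski R \in unitmx.
Proof.
have : Defs.minkowski R *m Defs.minkowski R = 1%:M.
  rewrite mul_diag_mx; apply/matrixP => i j; rewrite !mxE.
  by case: (i == j); case: (i == 0); rewrite ?mulr1n ?mulr0n ?mulrNN ?mulr1 ?mulr0.
by case/mulmx1_unit.
Qed.

Lemma lorentzian_sym x : U x -> (g x)^T = g x.
Proof. by move=> Ux; case: (lor.2 x Ux). Qed.

Lemma lorentzian_ginv x : U x -> g x *m ginv g x = 1%:M.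
Proof.
move=> Ux; have [_ [P [_ PgP]]] := lor.2 x Ux.
have : P^T *m g x *m P \in unitmx.
  by case: PgP => ->; [|rewrite -scaleN1r unitmxZ ?unitrN1 //];
    exact: minkowski_unit.
by rewrite !unitmx_mul => /andP [/andP [_ gU] _]; exact: mulmxV.
Qed.

End Lorentzian.

Unset Implicit Arguments.

Theorem theorem2 (R : realType) (U : set (pt R)) (g : pt R -> 'M[R]_4)
  (tau : pt R -> 'I_4 -> R) (K : pt R -> 'I_4 -> 'M[R[i]]_2)
  (C : pt R -> 'I_4 -> 'M[R[i]]_2) (kappa : pt R -> 'I_4 -> 'I_4 -> 'I_4 -> R) :
  open U ->
  lorentzian_on U g ->
  (* tau: smooth, unit *)
  (forall m, smooth_on U (fun x => tau x m)) ->
  (forall x, U x -> \sum_(m < 4) \sum_(n < 4) g x m n * tau x m * tau x n = 1) ->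
  (* K: smooth, Herm(2)-valued, Clifford relation, divergence-free trace part *)
  (forall n, smoothM_on U (fun x => K x n)) ->
  (forall x n, U x -> herm2 (K x n)) ->
  (forall x m n, U x ->
     K x m *m tildeM (K x n) + K x n *m tildeM (K x m)
     = (cR (2%:R * ginv g x m n))%:M) ->
  (forall x, U x -> divM g (fun y m => pip (K y m)) x = 0) ->
  (forall x n, U x -> pip (K x n) = (cR (tau x n))%:M) ->
  (* C: smooth, su(2)-valued *)
  (forall l, smoothM_on U (fun x => C x l)) ->
  (forall x l, U x -> su2_mat (C x l)) ->
  (* kappa: smooth real tensor kappa_{lam mu}^nu, traceless, antisymmetric *)
  (forall l m n, smooth_on U (fun x => kappa x l m n)) ->
  (forall x m, U x -> \sum_(l < 4) kappa x l m l = 0) ->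
  (forall x l m n, U x ->
     \sum_(r < 4) g x n r * kappa x l m r = - \sum_(r < 4) g x m r * kappa x l n r) ->
  (* the equation, with L^nu = pi_-(K^nu) *)
  (forall x l n, U x ->
     covM g (fun y m => pim (K y m)) x l n
       - (C x l *m pim (K x n) - pim (K x n) *m C x l)
     = \sum_(m < 4) cR (kappa x l m n) *: pim (K x m)) ->
  forall x l, U x ->
    C x l = - (4%:R)^-1 *:
      (\sum_(n < 4) covM g (fun y m => pim (K y m)) x l n
                      *m (\sum_(r < 4) cR (g x n r) *: pim (K x r))
       - \sum_(m < 4) \sum_(n < 4)
           cR (\sum_(r < 4) g x n r * kappa x l m r) *: (pim (K x m) *m pim (K x n))).
Proof.
move=> _ lor _ tau_unit _ herm cliff _ pipK _ su2 _ _ _ eqL x l Ux.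
have Gsym := lorentzian_sym lor Ux.
have [lf [Lspin frame]] :=
  pauli_frame (herm x ^~ Ux) (pipK x ^~ Ux) (fun m n => cliff x m n Ux).
have tnorm : (\col_n tau x n)^T *m g x *m \col_n tau x n = 1%:M.
  by rewrite quad_form_col tau_unit.
have gram := frame_orthonormal Gsym (lorentzian_ginv lor Ux) tnorm frame.
rewrite -(sum_lowered_comb (kappa x l) _ Gsym).
apply: (connection_solve (fun X => sum_spin_conj X Lspin gram)).
  by case: (su2 x l Ux).
by move=> n; exact: eqL.
Qed.
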